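(* For every $k\ge1$ and every $T\in\mathcal{GT}_k(n)$, the word $\omega(T)\in\mathrm{ACol}(C_n)^*$ is of highest weight, i.e. no Kashiwara operator $e_i$ ($1\le i\le n$) is defined on $\omega(T)$.
   Context: Type $C$ setting: $C_n=\{1<\cdots<n<\overline n<\cdots<\overline1\}$ with crystal graph $1\xrightarrow{1}2\xrightarrow{2}\cdots\xrightarrow{n-1}n\xrightarrow{n}\overline n\xrightarrow{n-1}\cdots\xrightarrow{1}\overline1$, and Kashiwara operators $e_i,f_i$ acting on $C_n^*$ by the tensor product rule. A column is a strictly increasing word; $N_z(u)$ counts letters $x\le z$ or $x\ge\overline z$; a column is admissible if nonempty with $N_z(u)\le z$ for all $z$. $\mathrm{ACol}(C_n)$ is the set of admissible columns plus a symbol $\epsilon$; $p:\mathrm{ACol}(C_n)^*\to C_n^*$ erases $\epsilon$ and sends a column to itself. $e_iw$ is defined for $w\in\mathrm{ACol}(C_n)^*$ iff $e_ip(w)$ is defined (and then it modifies the corresponding column). Blocks: $\mathfrak{c}(m)=12\cdots m$; $\mathfrak{c}(a,b)=(a+1)\cdots(a+b)$; $\mathfrak{c}(\overline a,c)=\overline a\,\overline{a-1}\cdots\overline{a-c+1}$ (empty when $b=0$ resp. $c=0$). $C$-trees: vertices are $i$ ($i\ge1$), $im$ and $im^-$ ($i,m\ge1$); levels: $i$ has level $i$, $im,im^-$ have level $i+m$; strand $i$ is ordered $i<i1<i1^-<i2<i2^-<\cdots$. A labelling of rank $k$ is $s$ from vertices of level $\le k$ to $\mathbb N$, with valuation $q(v)=s(i)+\sum_{im\le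 v}s(im)-\sum_{im^-\le v}s(im^-)$ for $v$ on strand $i$; it is an $n$-labelling if $0\le q(v)\le n$ for all such $v$. $\rho(i)=\mathfrak{c}(s(i))$; $\rho(im)=\mathfrak{c}(q(v'),s(im))$ with $v'$ the predecessor of $im$ on its strand; $\rho(im^-)=\mathfrak{c}(\overline{q(im)},s(im^-))$. Level reading: $\omega_t=\rho(t)\rho((t-1)1)\cdots\rho(1(t-1))\rho(1(t-1)^-)\rho(2(t-2)^-)\cdots\rho((t-1)1^-)$, or the letter $\epsilon$ if empty. $\mathcal{GT}_k(n)$ is the set of $n$-labellings of rank $k$ for which each $\omega_t$ ($1\le t\le k$) is $\epsilon$ or an admissible column; $\omega(T)=\omega_1\cdots\omega_k$. *)

From mathcomp Require Import all_boot all_order all_algebra.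
Set Implicit Arguments. Unset Strict Implicit. Unset Printing Implicit Defensive.
Import GRing.Theory Num.Theory.

(* [Pos a] is the letter a, [Neg a] is the letter \bar a; valid iff 1 <= a <= n. *)
Inductive cletter := Pos of nat | Neg of nat.

Definition valid_letter (n : nat) (x : cletter) : bool :=
  match x with Pos a | Neg a => (1 <= a <= n)%N end.

Definition crank (n : nat) (x : cletter) : nat :=
  match x with Pos a => a | Neg a => (2 * n + 1 - a)%N end.

(** Crystal structure of C_n (crystal graph
    1 -1-> 2 -2-> ... -> n -n-> \bar n -(n-1)-> ... -1-> \bar 1). *)
(* signature of a letter for e_i/f_i : Some true = '+' (e_i defined on it),
   Some false = '-' (f_i defined on it), None otherwise. *)
Definition csign (n i : nat) (x : cletter) : option bool :=
  if (i < n)%N then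
    match x with
    | Pos a => if a == i.+1 then Some true else if a == i then Some false else None
    | Neg a => if a == i then Some true else if a == i.+1 then Some false else None
    end
  else if i == n then
    match x with
    | Pos a => if a == n then Some false else None
    | Neg a => if a == n then Some true else None
    end
  else None.

(* e_i on a single letter (only meaningful when csign n i x = Some true) *)
Definition e_letter (n i : nat) (x : cletter) : cletter :=
  match x with
  | Pos a => Pos a.-1
  | Neg a => if a == n then Pos n else Neg a.+1
  end.

(* Tensor product rule on words: a '-' followed later by a '+' cancel;
   the reduced signature is +^a -^b and e_i acts on the rightmost
   uncancelled '+'.  [escan] returns the position of that letter, if any. *)
Fixpoint escan (n i : nat) (w : seq cletter) (pos minus : nat) (lastplus : option nat)
  : option nat :=
  match w with
  | [::] => lastplus
  | x :: w' =>
      match csign n i x with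
      | Some false => escan n i w' pos.+1 minus.+1 lastplus
      | Some true =>
          if (0 < minus)%N then escan n i w' pos.+1 minus.-1 lastplus
          else escan n i w' pos.+1 minus (Some pos)
      | None => escan n i w' pos.+1 minus lastplus
      end
  end.

Definition ekash (n i : nat) (w : seq cletter) : option (seq cletter) :=
  match escan n i w 0 0 None with
  | None => None
  | Some j => Some (set_nth (Pos 0) w j (e_letter n i (nth (Pos 0) w j)))
  end.

Definition is_column (n : nat) (u : seq cletter) : bool :=
  all (valid_letter n) u && sorted (fun x y => (crank n x < crank n y)%N) u.

(* N_z(u) = number of letters x <= z or x >= \bar z *)
Definition Nz (z : nat) (u : seq cletter) : nat :=
  count (fun x => match x with Pos a | Neg a => (a <= z)%N end) u.

Definition admissible (n : nat) (u : seq cletter) : Prop :=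
  [/\ is_column n u, (0 < size u)%N & forall z : nat, (Nz z u <= z)%N].

(* ACol(C_n)^* : words of (admissible) columns or epsilon (= None) *)
Definition acol_word := seq (option (seq cletter)).

Definition pACol (w : acol_word) : seq cletter := flatten [seq odflt [::] c | c <- w].

Definition eACol_defined (n i : nat) (w : acol_word) : bool :=
  isSome (ekash n i (pACol w)).

Definition highest_weight (n : nat) (w : acol_word) : Prop :=
  forall i : nat, (1 <= i <= n)%N -> ~~ eACol_defined n i w.

Definition cblock (m : nat) : seq cletter := [seq Pos j | j <- iota 1 m].
Definition cblockP (a b : nat) : seq cletter := [seq Pos j | j <- iota a.+1 b].
Definition cblockN (a c : nat) : seq cletter := [seq Neg (a - j) | j <- iota 0 c].

(* [VR i] = vertex i, [VP i m] = vertex im, [VM i m] = vertex im^- *)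
Inductive vtx := VR of nat | VP of nat & nat | VM of nat & nat.

Definition is_vtx (v : vtx) : bool :=
  match v with VR i => (1 <= i)%N | VP i m | VM i m => (1 <= i)%N && (1 <= m)%N end.

Definition level (v : vtx) : nat :=
  match v with VR i => i | VP i m | VM i m => (i + m)%N end.

(* A labelling: values on vertices of level > k are irrelevant. *)
Definition labelling := vtx -> nat.

Local Open Scope ring_scope.

(* valuation q(v), with strand order i < i1 < i1^- < i2 < i2^- < ... *)
Definition qval (s : labelling) (v : vtx) : int :=
  match v with
  | VR i => (s (VR i))%:Z
  | VP i m => (s (VR i))%:Z + \sum_(1 <= j < m.+1) (s (VP i j))%:Z
                               - \sum_(1 <= j < m) (s (VM i j))%:Z
  | VM i m => (s (VR i))%:Z + \sum_(1 <= j < m.+1) (s (VP i j))%:Z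
                               - \sum_(1 <= j < m.+1) (s (VM i j))%:Z
  end.

Local Close Scope ring_scope.

Definition n_labelling (n k : nat) (s : labelling) : Prop :=
  forall v : vtx, is_vtx v -> (level v <= k)%N ->
    (0 <= qval s v)%R /\ (qval s v <= n%:Z)%R.

Definition vpred (i m : nat) : vtx := if m == 1%N then VR i else VM i m.-1.

Definition rho (s : labelling) (v : vtx) : seq cletter :=
  match v with
  | VR i => cblock (s v)
  | VP i m => cblockP (absz (qval s (vpred i m))) (s v)
  | VM i m => cblockN (absz (qval s (VP i m))) (s v)
  end.

(* the word of level t (before replacing the empty word by epsilon) *)
Definition level_word (s : labelling) (t : nat) : seq cletter :=
  rho s (VR t)
  ++ flatten [seq rho s (VP j (t - j)) | j <- rev (iota 1 t.-1)]
  ++ flatten [seq rho s (VM j (t - j)) | j <- iota 1 t.-1].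

Definition omega_t (s : labelling) (t : nat) : option (seq cletter) :=
  if level_word s t is [::] then None else Some (level_word s t).

Definition omega (k : nat) (s : labelling) : acol_word :=
  [seq omega_t s t | t <- iota 1 k].

Definition in_GT (n k : nat) (s : labelling) : Prop :=
  n_labelling n k s /\
  forall t : nat, (1 <= t <= k)%N ->
    level_word s t = [::] \/ admissible n (level_word s t).

From mathcomp Require Import all_boot all_order all_algebra.
From mathcomp Require Import zify ring.
Set Implicit Arguments. Unset Strict Implicit. Unset Printing Implicit Defensive.
Import GRing.Theory Num.Theory.
Local Open Scope ring_scope.

(* By the tensor product rule, e_i is undefined on a word
   exactly when every letter of signature '+' is cancelled by an earlier
   letter of signature '-', i.e. when the word is a ballot word for the
   charge +1 on '-' letters and -1 on '+' letters.  We prove this through a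
   potential: [pot a] is phi_i of the column 1 2 ... a, and the charge of
   a+1 (resp. \bar{a+1}) is [pot (a+1) - pot a] (resp. [pot a - pot (a+1)]).
   Hence a block c(a,b) or c(\bar a,c) "carries the potential" between the
   two valuations at its ends, and is a ballot word as soon as the starting
   balance covers the initial potential.  Along each strand of the C-tree the
   blocks of consecutive vertices chain these transitions (this uses only
   that the valuations are nonnegative), so the level word omega_t raises the
   total potential of the strands from the level t-1 to the level t while
   staying a ballot word.  Concatenating the levels, the word p(omega(T)) is
   a ballot word from balance 0, and no e_i is defined on it. *)

Section Ballot.
Variables n i : nat.

Definition charge (x : cletter) : int :=
  match csign n i x with Some true => -1 | Some false => 1 | None => 0 end.

Definition charge_sum (w : seq cletter) : int := \sum_(x <- w) charge x.

Lemma charge_sum_cat u v : charge_sum (u ++ v) = charge_sum u + charge_sum v.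
Proof. exact: big_cat. Qed.

(* [ballot b w]: starting with [b] unmatched '-', every prefix of [w] keeps a
   nonnegative balance, i.e. every '+' of [w] is cancelled by an earlier '-'. *)
Fixpoint ballot (b : int) (w : seq cletter) : Prop :=
  if w is x :: w' then 0 <= b + charge x /\ ballot (b + charge x) w' else True.

Lemma ballot_cat b u v :
  ballot b (u ++ v) <-> ballot b u /\ ballot (b + charge_sum u) v.
Proof.
rewrite /charge_sum; elim: u b => [|x u IHu] b /=.
  by rewrite big_nil addr0; tauto.
by rewrite big_cons IHu addrA; tauto.
Qed.

(* A ballot word leaves no uncancelled '+', so the tensor product rule finds
   no letter for e_i to act on. *)
Lemma ballot_escan w (pos minus : nat) :
  ballot minus%:Z w -> escan n i w pos minus None = None.
Proof.
elim: w pos minus => [|x w IHw] pos minus //= [balance_ge0 ballot_w].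
move: balance_ge0 ballot_w; rewrite /charge; case: (csign n i x) => [[]|] ? ballot_w.
- have minus_gt0 : (0 < minus)%N by lia.
  by rewrite minus_gt0; apply: IHw; rewrite predn_int.
- by apply: IHw; rewrite -addn1 PoszD.
- by apply: IHw; rewrite addr0 in ballot_w.
Qed.

End Ballot.

Section Potential.
Variables n i : nat.
Hypothesis i_range : (1 <= i <= n)%N.

(* [pot a] is the value at alpha_i^vee of the fundamental weight of the column
   1 2 ... a (for a <= n), i.e. phi_i of that column. *)
Definition pot (a : nat) : nat :=
  if (i < n)%N then nat_of_bool (a == i) else nat_of_bool (n <= a)%N.

Lemma pot0 : pot 0 = 0%N.
Proof. by move: i_range; rewrite /pot; case: ifP; lia. Qed.

Lemma charge_Pos a : charge n i (Pos a.+1) = (pot a.+1)%:Z - (pot a)%:Z.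
Proof.
move: i_range => /andP[i_gt0 i_le_n]; rewrite /charge /csign /pot.
case: (ltnP i n) => [i_lt_n|n_le_i]; last have -> : i == n by lia.
all: by do ![case: eqP => ? | case: leqP => ?] => //; lia.
Qed.

Lemma charge_Neg a : charge n i (Neg a.+1) = (pot a)%:Z - (pot a.+1)%:Z.
Proof.
move: i_range => /andP[i_gt0 i_le_n]; rewrite /charge /csign /pot.
case: (ltnP i n) => [i_lt_n|n_le_i]; last have -> : i == n by lia.
all: by do ![case: eqP => ? | case: leqP => ?] => //; lia.
Qed.

Definition transition (lo hi : nat) (w : seq cletter) : Prop :=
  (forall b : int, (pot lo)%:Z <= b -> ballot n i b w) /\
  charge_sum n i w = (pot hi)%:Z - (pot lo)%:Z.

Lemma transition_cblockP a c : transition a (a + c) (cblockP a c).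
Proof.
rewrite /transition /charge_sum /cblockP.
elim: c a => [|c IHc] a /=; first by rewrite big_nil addn0 subrr.
rewrite big_cons charge_Pos; have [ballot_tail sum_tail] := IHc a.+1.
split; last by rewrite sum_tail addSnnS; lia.
move=> b b_ge; split; first by lia.
by apply: ballot_tail; lia.
Qed.

Lemma transition_Neg_run q r c : (r + c <= q)%N ->
  transition (q - r) (q - r - c) [seq Neg (q - j) | j <- iota r c].
Proof.
rewrite /transition /charge_sum.
elim: c r => [|c IHc] r r_le /=; first by rewrite big_nil subn0 subrr.
have q_r : (q - r = (q - r.+1).+1)%N by lia.
rewrite big_cons q_r charge_Neg; have [ballot_tail sum_tail] := IHc r.+1 ltac:(lia).
split; last by rewrite sum_tail subSS; lia.
move=> b b_ge; split; first by lia.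
by apply: ballot_tail; lia.
Qed.

Lemma transition_cblockN q c : (c <= q)%N -> transition q (q - c) (cblockN q c).
Proof. by move=> c_le; have := @transition_Neg_run q 0 c c_le; rewrite !subn0. Qed.

Lemma transition_flatten (J : seq nat) (lo hi : nat -> nat) (w : nat -> seq cletter) :
  (forall j, j \in J -> transition (lo j) (hi j) (w j)) ->
  forall R : int, 0 <= R ->
  ballot n i (R + \sum_(j <- J) (pot (lo j))%:Z) (flatten [seq w j | j <- J]) /\
  charge_sum n i (flatten [seq w j | j <- J])
    = \sum_(j <- J) (pot (hi j))%:Z - \sum_(j <- J) (pot (lo j))%:Z.
Proof.
elim: J => [|j J IHJ] trans_J R R_ge0.
  by rewrite /charge_sum !big_nil addr0 subrr.
have [ballot_j sum_j] := trans_J j (mem_head _ _).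
have trans_tail j' : j' \in J -> transition (lo j') (hi j') (w j').
  by move=> j'J; apply: trans_J; rewrite inE j'J orbT.
have [ballot_J sum_J] := IHJ trans_tail (R + (pot (hi j))%:Z) ltac:(exact: addr_ge0).
rewrite /= !big_cons; split; last by rewrite charge_sum_cat sum_j sum_J; ring.
apply/ballot_cat; split.
  by apply: ballot_j; rewrite addrCA lerDl addr_ge0 // sumr_ge0.
by move: ballot_J; congr ballot; rewrite sum_j; ring.
Qed.

End Potential.

Lemma qval_VP (s : labelling) j m :
  (1 <= m)%N -> qval s (VP j m) = qval s (vpred j m) + (s (VP j m))%:Z.
Proof.
case: m => [//|[|m]] _ /=; first by rewrite /vpred /= big_nat1 big_geq // subr0.
by rewrite /vpred /= (big_nat_recr m.+2) //=; ring.
Qed.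

Lemma qval_VM (s : labelling) j m :
  (1 <= m)%N -> qval s (VM j m) = qval s (VP j m) - (s (VM j m))%:Z.
Proof.
case: m => [//|m] _ /=.
by rewrite [\sum_(1 <= l < m.+2) (s (VM j l))%:Z](big_nat_recr m.+1) //=; ring.
Qed.

Lemma vpred_vtx j m : (1 <= j)%N -> (1 <= m)%N ->
  is_vtx (vpred j m) /\ level (vpred j m) = (j + m).-1.
Proof. by rewrite /vpred; case: eqP => /= [->|]; lia. Qed.

Definition qnat (s : labelling) (v : vtx) : nat := absz (qval s v).

Section NLabelling.
Variables (n k : nat) (s : labelling).
Hypothesis s_labelling : n_labelling n k s.

Lemma qnatE v : is_vtx v -> (level v <= k)%N -> (qnat s v)%:Z = qval s v.
Proof. by move=> v_vtx v_level; have [/gez0_abs <- _] := s_labelling v_vtx v_level. Qed.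

Variable i : nat.
Hypothesis i_range : (1 <= i <= n)%N.

(* Along strand [j], the blocks of [jm] and [jm^-] carry the potential from
   the valuation of the predecessor of [jm] to that of [jm], then to that of
   [jm^-]: this is where the nonnegativity of the valuations is used. *)
Lemma strand_transitions j m : (1 <= j)%N -> (1 <= m)%N -> (j + m <= k)%N ->
  transition n i (qnat s (vpred j m)) (qnat s (VP j m)) (rho s (VP j m)) /\
  transition n i (qnat s (VP j m)) (qnat s (VM j m)) (rho s (VM j m)).
Proof.
move=> j_gt0 m_gt0 jm_le_k.
have [pred_vtx pred_level] := vpred_vtx j_gt0 m_gt0.
have q_pred := qnatE pred_vtx ltac:(lia).
have q_VP := @qnatE (VP j m) ltac:(rewrite /=; lia) ltac:(rewrite /=; lia).
have q_VM := @qnatE (VM j m) ltac:(rewrite /=; lia) ltac:(rewrite /=; lia).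
have rec_VP := qval_VP s j m_gt0; have rec_VM := qval_VM s j m_gt0.
split.
  have -> : qnat s (VP j m) = (qnat s (vpred j m) + s (VP j m))%N by lia.
  exact: transition_cblockP.
have -> : qnat s (VM j m) = (qnat s (VP j m) - s (VM j m))%N by lia.
by apply: transition_cblockN; lia.
Qed.

(* The potential after reading the levels 1..t: on each strand j <= t, the
   potential of the valuation of the last vertex of level <= t. *)
Definition budget (t : nat) : int :=
  \sum_(j <- iota 1 t) (pot n i (qnat s (vpred j (t.+1 - j))))%:Z.

Lemma budget_before t : (1 <= t)%N ->
  budget t.-1 = \sum_(j <- iota 1 t.-1) (pot n i (qnat s (vpred j (t - j))))%:Z.
Proof. by move=> t_gt0; rewrite /budget prednK. Qed.

Lemma budget_after t : (1 <= t)%N ->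
  budget t = \sum_(j <- iota 1 t.-1) (pot n i (qnat s (VM j (t - j))))%:Z
             + (pot n i (s (VR t)))%:Z.
Proof.
move=> t_gt0; have split_iota : iota 1 t = iota 1 t.-1 ++ [:: t].
  by rewrite -{1}(prednK t_gt0) -[t.-1.+1]addn1 iotaD add1n prednK.
rewrite /budget split_iota big_cat big_seq1 subSnn; congr (_ + _).
apply: eq_big_seq => j; rewrite mem_iota => j_range.
have -> : (t.+1 - j = (t - j).+1)%N by lia.
by rewrite /vpred eqSS; have -> : (t - j == 0)%N = false by lia.
Qed.

Lemma level_word_transition t : (1 <= t <= k)%N ->
  ballot n i (budget t.-1) (level_word s t) /\
  charge_sum n i (level_word s t) = budget t - budget t.-1.
Proof.
move=> /andP[t_gt0 t_le_k].
pose pred_q j := qnat s (vpred j (t - j)).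
pose VP_q j := qnat s (VP j (t - j)).
pose VM_q j := qnat s (VM j (t - j)).
have strands j : j \in iota 1 t.-1 ->
    transition n i (pred_q j) (VP_q j) (rho s (VP j (t - j))) /\
    transition n i (VP_q j) (VM_q j) (rho s (VM j (t - j))).
  by rewrite mem_iota => j_range; apply: strand_transitions; lia.
have [root_ballot root_sum] : transition n i 0 (s (VR t)) (rho s (VR t)).
  by have := transition_cblockP i_range 0 (s (VR t)); rewrite add0n.
have VP_trans j : j \in rev (iota 1 t.-1) ->
    transition n i (pred_q j) (VP_q j) (rho s (VP j (t - j))).
  by rewrite mem_rev => /strands [].
have VM_trans j : j \in iota 1 t.-1 ->
    transition n i (VP_q j) (VM_q j) (rho s (VM j (t - j))).
  by move=> /strands [].
pose R := (pot n i (s (VR t)))%:Z.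
have R_ge0 : 0 <= R by [].
have [VP_ballot VP_sum] := transition_flatten VP_trans R_ge0.
have [VM_ballot VM_sum] := transition_flatten VM_trans R_ge0.
rewrite !big_rev in VP_ballot VP_sum.
rewrite (pot0 i_range) in root_ballot root_sum.
rewrite (budget_before t_gt0) (budget_after t_gt0) /level_word.
split; last by rewrite !charge_sum_cat root_sum VP_sum VM_sum; ring.
apply/ballot_cat; split; first by apply: root_ballot; exact: sumr_ge0.
apply/ballot_cat; split.
  by move: VP_ballot; congr ballot; rewrite root_sum; ring.
by move: VM_ballot; congr ballot; rewrite root_sum VP_sum; ring.
Qed.

Lemma levels_ballot t : (t <= k)%N ->
  ballot n i 0 (flatten [seq level_word s u | u <- iota 1 t]) /\
  charge_sum n i (flatten [seq level_word s u | u <- iota 1 t]) = budget t.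
Proof.
elim: t => [|t IHt] t_le_k; first by rewrite /charge_sum /budget !big_nil.
have [prefix_ballot prefix_sum] := IHt (ltnW t_le_k).
have [level_ballot level_sum] := @level_word_transition t.+1 t_le_k.
rewrite -[t.+1]addn1 iotaD map_cat flatten_cat /= cats0 add1n addn1.
split; last by rewrite charge_sum_cat prefix_sum level_sum addrC subrK.
by apply/ballot_cat; split; last by rewrite prefix_sum add0r.
Qed.

End NLabelling.

Lemma pACol_omega k (s : labelling) :
  pACol (omega k s) = flatten [seq level_word s t | t <- iota 1 k].
Proof.
rewrite /pACol /omega -map_comp; congr flatten; apply: eq_map => t /=.
by rewrite /omega_t; case: (level_word s t).
Qed.

Theorem corollary5p2 (n k : nat) (s : labelling) :
  (1 <= k)%N -> in_GT n k s -> highest_weight n (omega k s).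
Proof.
move=> _ [s_labelling _] i i_range.
have [word_ballot _] := levels_ballot s_labelling i_range (leqnn k).
by rewrite /eACol_defined /ekash pACol_omega (ballot_escan 0 word_ballot).
Qed.
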